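(* Let $(X,A,Y)$ be jointly distributed real-valued random variables ($X$ arbitrary) with $\mathbb{E}[A^2],\mathbb{E}[Y^2]<\infty$. Consider all (possibly randomized) representations $Z=g(X)$. Then the set $$\mathcal{R}_{\mathrm{LS}}:=\{(\operatorname{Var}\mathbb{E}[Y\mid Z],\ \operatorname{Var}\mathbb{E}[A\mid Z]) : Z=g(X)\}\subseteq\mathbb{R}^2$$ is convex.
   Context: A (possibly randomized) representation is $Z=g(X,S)$ for a measurable $g$ and auxiliary randomness $S$ independent of $(X,A,Y)$. $\operatorname{Var}\mathbb{E}[Y\mid Z]$ denotes the variance of the conditional expectation $\mathbb{E}[Y\mid Z]$. *)

From HB Require Import structures.
From mathcomp Require Import all_boot all_order all_algebra.
From mathcomp Require Import all_classical all_reals all_analysis.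
Set Implicit Arguments. Unset Strict Implicit. Unset Printing Implicit Defensive.
Import Order.TTheory GRing.Theory Num.Theory.
Local Open Scope classical_set_scope.
Local Open Scope ring_scope.

(* [is_cond_exp P Z Y h] : h \o Z is a version of the conditional
   expectation E[Y | Z] on the probability space (T, P): h is measurable
   (so h \o Z is sigma(Z)-measurable; by Doob-Dynkin every
   sigma(Z)-measurable real r.v. has this form), h \o Z is integrable and
   E[Y 1_{Z in B}] = E[h(Z) 1_{Z in B}] for every measurable B. *)
Definition is_cond_exp {d} {T : measurableType d} {R : realType}
  (P : probability T R) {dZ} {TZ : measurableType dZ}
  (Z : T -> TZ) (Y : T -> R) (h : TZ -> R) : Prop :=
  [/\ measurable_fun setT h,
      P.-integrable setT (fun w => (h (Z w))%:E) &
      forall B : set TZ, measurable B ->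
        (\int[P]_(w in Z @^-1` B) (Y w)%:E =
         \int[P]_(w in Z @^-1` B) (h (Z w))%:E)%E].

(* The set R_LS of pairs (Var E[Y|Z], Var E[A|Z]) over all (possibly
   randomized) representations Z = g(X, S), where S is auxiliary randomness
   with an arbitrary law Q on an arbitrary measurable space TS, independent
   of (X, A, Y): the underlying space is enlarged to (T * TS, P \x Q), with
   X, A, Y depending on the first coordinate and S the second one. *)
Definition R_LS {d} {T : measurableType d} {R : realType}
  (P : probability T R) {dX} {TX : measurableType dX}
  (X : T -> TX) (A Y : T -> R) : set (R * R) :=
  [set p | exists (dS : measure_display) (TS : measurableType dS)
             (Q : probability TS R)
             (dZ : measure_display) (TZ : measurableType dZ)
             (g : (TX * TS)%type -> TZ) (hY hA : TZ -> R),
      let Z := fun w : (T * TS)%type => g (X w.1, w.2) in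
      [/\ measurable_fun setT g,
          is_cond_exp (P \x Q)%E Z (fun w => Y w.1) hY,
          is_cond_exp (P \x Q)%E Z (fun w => A w.1) hA &
          p = (fine ('V_(P \x Q)%E [hY \o Z]), fine ('V_(P \x Q)%E [hA \o Z]))]].

From mathcomp Require Import all_boot all_order all_algebra.
From mathcomp Require Import all_classical all_reals all_analysis.
From mathcomp Require Import measurable_realfun ring lra zify.
Import Order.TTheory GRing.Theory Num.Theory.
Local Open Scope classical_set_scope.
Local Open Scope ring_scope.

(* Given representations Z1 = g1(X, S1) and Z2 = g2(X, S2), toss a coin B,
   independent of everything else, with P(B = true) = t, and reveal
   Z = (B, Z1, z2) if B = true and Z = (B, z1, Z2) otherwise, for fixed points
   z1, z2.  As B is part of Z, E[Y | Z] is E[Y | Z1] on {B = true} and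
   E[Y | Z2] on {B = false}; both have mean E[Y], hence
   Var E[Y | Z] = t Var E[Y | Z1] + (1 - t) Var E[Y | Z2], and likewise for A.

   Since [fine] sends +oo to 0, this needs E[Y | Zi] = h(Zi) to be square
   integrable, while [is_cond_exp] only constrains the integrals of h(Z) over
   the sets {Z in B}.  On a cell C = {a <= s h(Z) <= 2a} with s = +-1 these
   give a P(C) <= E[s h(Z); C] = E[s Y; C] <= E[|Y|; C], whence
   E[h(Z)^2; C] <= 4 E[Y^2; C]; summing over the cells [n+1, n+2) bounds
   E[h(Z)^2]. *)

Lemma integrable_sqr_Lfun2 {d} {T : measurableType d} {R : realType}
  (mu : {measure set T -> \bar R}) (f : T -> R) : measurable_fun setT f ->
  mu.-integrable setT (EFin \o (fun x => f x ^+ 2)) -> f \in Lfun mu 2%:E.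
Proof.
move=> mf /integrableP[_ f2_fin].
rewrite inE; apply/andP; split; rewrite inE //=.
rewrite /finite_norm (@lty_poweRy _ _ 2) // poweR_Lnorm //.
suff -> : (\int[mu]_x `|(f x)%:E| `^ 2 = \int[mu]_x `|(f x ^+ 2)%:E|)%E by [].
by apply: eq_integral => x _ /=; rewrite normrX -[2]/(2%:R) -powR_mulrn.
Qed.

Lemma Lfun_measurable {d} {T : measurableType d} {R : realType}
  {mu : {measure set T -> \bar R}} {p : \bar R} {f : T -> R} :
  f \in Lfun mu p -> measurable_fun setT f.
Proof. by move=> /sub_Lfun_mfun; rewrite inE. Qed.

Lemma Lfun2_integrable {d} {T : measurableType d} {R : realType}
  {P : probability T R} {f : T -> R} :
  f \in Lfun P 2%:E -> P.-integrable setT (EFin \o f).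
Proof.
by move=> f2; apply/Lfun1_integrable/Lfun_subset12 => //; exact: fin_num_measure.
Qed.

Lemma probability_inhabited {d} {T : measurableType d} {R : realType}
  (P : probability T R) : inhabited T.
Proof.
case: (pselect (inhabited T)) => // nT.
have T0 : [set: T] = set0 by apply/seteqP; split => w // _; apply: nT.
have := probability_setT P; rewrite T0 measure0 => -[] /esym/eqP.
by rewrite oner_eq0.
Qed.

Lemma variance_integral {d} {T : measurableType d} {R : realType}
  (P : probability T R) (X : T -> R) :
  'V_P[X] = (\int[P]_w ((X w - fine (\int[P]_x (X x)%:E)) ^+ 2)%:E)%E.
Proof.
by rewrite /variance !unlock; apply: eq_integral => w _; rewrite expr2.
Qed.

Section product_probability.
Local Open Scope ereal_scope.
Context {R : realType} {d1 d2 : measure_display} {T1 : measurableType d1}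
  {T2 : measurableType d2}.
Variables (P1 : probability T1 R) (P2 : probability T2 R).

Lemma ge0_integral_prod_fst (f : T1 -> \bar R) :
  measurable_fun setT f -> (forall x, 0 <= f x) ->
  \int[P1 \x P2]_w f w.1 = \int[P1]_x f x.
Proof.
move=> mf f0; rewrite (fubini_tonelli1 (fun w => f w.1)) //=; last first.
  exact: measurableT_comp mf measurable_fst.
apply: eq_integral => x _; rewrite /fubini_F /= integral_cst //.
by rewrite [X in _ * X]probability_setT mule1.
Qed.

Lemma ge0_integral_prod_snd (f : T2 -> \bar R) :
  measurable_fun setT f -> (forall x, 0 <= f x) ->
  \int[P1 \x P2]_w f w.2 = \int[P2]_x f x.
Proof.
move=> mf f0; rewrite (fubini_tonelli2 (fun w => f w.2)) //=; last first.
  exact: measurableT_comp mf measurable_snd.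
apply: eq_integral => x _; rewrite /fubini_G /= integral_cst //.
by rewrite [X in _ * X]probability_setT mule1.
Qed.

Lemma integral_prod_fst (f : T1 -> \bar R) : measurable_fun setT f ->
  \int[P1 \x P2]_w f w.1 = \int[P1]_x f x.
Proof.
move=> mf; rewrite integralE (integralE _ _ f).
rewrite -(ge0_integral_prod_fst _ (measurable_funepos mf)) //.
rewrite -(ge0_integral_prod_fst _ (measurable_funeneg mf)) //.
by congr (_ - _); apply: eq_integral => w _; rewrite ?funeposE ?funenegE.
Qed.

Lemma integrable_prod_fst (f : T1 -> \bar R) : P1.-integrable setT f ->
  (P1 \x P2).-integrable setT (fun w => f w.1).
Proof.
move=> /integrableP[mf f_fin]; apply/integrableP; split.
  exact: measurableT_comp mf measurable_fst.
rewrite (ge0_integral_prod_fst (abse \o f)) // => [|x]; last exact: abse_ge0.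
exact: measurableT_comp.
Qed.

Lemma Lfun2_prod_fst (f : T1 -> R) :
  f \in Lfun P1 2%:E -> (fun w => f w.1) \in Lfun (P1 \x P2) 2%:E.
Proof.
move=> f2; apply: integrable_sqr_Lfun2.
  exact: measurableT_comp (Lfun_measurable f2) measurable_fst.
exact: integrable_prod_fst _ (Lfun2_integrable_sqr f2).
Qed.

End product_probability.

Definition mixf {T S1 S2 U : Type} (f1 : T * S1 -> U) (f2 : T * S2 -> U)
    (w : T * (bool * (S1 * S2))) : U :=
  if w.2.1 then f1 (w.1, w.2.2.1) else f2 (w.1, w.2.2.2).

Lemma mixf_comp {T S1 S2 U V : Type} (g : U -> V) (f1 : T * S1 -> U)
    (f2 : T * S2 -> U) :
  g \o mixf f1 f2 = mixf (g \o f1) (g \o f2).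
Proof. by apply/funext => w; rewrite /mixf /=; case: ifP. Qed.

Lemma measurable_mixf {d dS1 dS2 dU} {T : measurableType d}
    {S1 : measurableType dS1} {S2 : measurableType dS2} {U : measurableType dU}
    {f1 : T * S1 -> U} {f2 : T * S2 -> U} :
  measurable_fun setT f1 -> measurable_fun setT f2 ->
  measurable_fun setT (mixf f1 f2).
Proof.
move=> mf1 mf2; apply: measurable_fun_ifT.
- exact: measurableT_comp measurable_fst measurable_snd.
- apply/(measurableT_comp mf1)/measurable_fun_pair => //.
  exact/(measurableT_comp measurable_fst)/measurableT_comp.
- apply/(measurableT_comp mf2)/measurable_fun_pair => //.
  exact/(measurableT_comp measurable_snd)/measurableT_comp.
Qed.

Section mixture.
Local Open Scope ereal_scope.
Context {R : realType} {d dS1 dS2 : measure_display} {T : measurableType d}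
  {S1 : measurableType dS1} {S2 : measurableType dS2}.
Variables (P : probability T R) (Q1 : probability S1 R) (Q2 : probability S2 R).
Variable t : R.
Hypothesis t01 : (0 <= t <= 1)%R.

Definition mixQ : probability (bool * (S1 * S2))%type R :=
  bernoulli_prob t \x (Q1 \x Q2).

Lemma ge0_integral_mixQ (g1 : S1 -> \bar R) (g2 : S2 -> \bar R) :
  measurable_fun setT g1 -> measurable_fun setT g2 ->
  (forall s, 0 <= g1 s) -> (forall s, 0 <= g2 s) ->
  \int[mixQ]_s (if s.1 then g1 s.2.1 else g2 s.2.2) =
  t%:E * \int[Q1]_s g1 s + (1 - t)%:E * \int[Q2]_s g2 s.
Proof.
move=> mg1 mg2 g10 g20.
have g0 b (s : (S1 * S2)%type) : 0 <= (if b then g1 s.1 else g2 s.2).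
  by case: b; [exact: g10 | exact: g20].
rewrite fubini_tonelli1 //=; last first.
  apply: measurable_fun_ifT => //.
  + exact/(measurableT_comp mg1)/measurableT_comp.
  + exact/(measurableT_comp mg2)/measurableT_comp.
rewrite integral_bernoulli_prob //; last first.
  by move=> b; apply: integral_ge0 => s _; exact: g0.
by rewrite /fubini_F /= ge0_integral_prod_fst // ge0_integral_prod_snd.
Qed.

Lemma ge0_integral_mix (f1 : T * S1 -> \bar R) (f2 : T * S2 -> \bar R) :
  measurable_fun setT f1 -> measurable_fun setT f2 ->
  (forall w, 0 <= f1 w) -> (forall w, 0 <= f2 w) ->
  \int[P \x mixQ]_w mixf f1 f2 w =
  t%:E * \int[P \x Q1]_w f1 w + (1 - t)%:E * \int[P \x Q2]_w f2 w.
Proof.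
move=> mf1 mf2 f10 f20.
have mf := measurable_mixf mf1 mf2.
have f0 w : 0 <= mixf f1 f2 w by rewrite /mixf; case: ifP.
have [t0 t1] : (0 <= t)%R /\ (0 <= 1 - t)%R by rewrite subr_ge0; apply/andP.
rewrite !fubini_tonelli1 //.
have mF1 := measurable_fun_fubini_tonelli_F (m2 := Q1) _ mf1 f10.
have mF2 := measurable_fun_fubini_tonelli_F (m2 := Q2) _ mf2 f20.
have F10 x : 0 <= fubini_F Q1 f1 x by apply: integral_ge0.
have F20 x : 0 <= fubini_F Q2 f2 x by apply: integral_ge0.
rewrite -[in RHS]ge0_integralZl // -[in RHS]ge0_integralZl //.
rewrite -ge0_integralD //; last 4 first.
- by move=> x _; rewrite mule_ge0.
- exact: measurable_funeM.
- by move=> x _; rewrite mule_ge0.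
- exact: measurable_funeM.
apply: eq_integral => x _; apply: ge0_integral_mixQ => //.
- exact/(measurableT_comp mf1)/measurable_fun_pair.
- exact/(measurableT_comp mf2)/measurable_fun_pair.
Qed.

Lemma integrable_mix (f1 : T * S1 -> \bar R) (f2 : T * S2 -> \bar R) :
  (P \x Q1).-integrable setT f1 -> (P \x Q2).-integrable setT f2 ->
  (P \x mixQ).-integrable setT (mixf f1 f2).
Proof.
move=> /integrableP[mf1 f1_fin] /integrableP[mf2 f2_fin].
apply/integrableP; split; first exact: measurable_mixf.
have -> : (fun w => `|mixf f1 f2 w|) = mixf (abse \o f1) (abse \o f2).
  exact: mixf_comp.
rewrite ge0_integral_mix //; [|exact: measurableT_comp|exact: measurableT_comp|
  by move=> ?; exact: abse_ge0|by move=> ?; exact: abse_ge0].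
have [t0 t1] : (0 <= t)%R /\ (0 <= 1 - t)%R by rewrite subr_ge0; apply/andP.
by rewrite lte_add_pinfty // lte_mul_pinfty // lee_fin.
Qed.

Lemma integral_mix (f1 : T * S1 -> \bar R) (f2 : T * S2 -> \bar R) :
  (P \x Q1).-integrable setT f1 -> (P \x Q2).-integrable setT f2 ->
  \int[P \x mixQ]_w mixf f1 f2 w =
  t%:E * \int[P \x Q1]_w f1 w + (1 - t)%:E * \int[P \x Q2]_w f2 w.
Proof.
move=> if1 if2; have /integrableP[mf1 _] := if1; have /integrableP[mf2 _] := if2.
rewrite integralE (integralE _ _ f1) (integralE _ _ f2).
have -> : (mixf f1 f2)^\+ = mixf f1^\+ f2^\+.
  by apply/funext => w; rewrite /mixf !funeposE; case: ifP.
have -> : (mixf f1 f2)^\- = mixf f1^\- f2^\-.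
  by apply/funext => w; rewrite /mixf !funenegE; case: ifP.
rewrite !ge0_integral_mix //; try exact: measurable_funepos;
  try exact: measurable_funeneg.
have := integrable_pos_fin_num measurableT if1.
have := integrable_neg_fin_num measurableT if1.
have := integrable_pos_fin_num measurableT if2.
have := integrable_neg_fin_num measurableT if2.
by move=> /fineK <- /fineK <- /fineK <- /fineK <- /=; congr EFin; ring.
Qed.

End mixture.

Lemma integral_abs_le_sqr {d} {T : measurableType d} {R : realType}
    (mu : {measure set T -> \bar R}) (D : set T) (f : T -> R) (a : R) :
  measurable D -> measurable_fun D f -> 0 < a ->
  (\int[mu]_(x in D) `|(f x)%:E| <=
   (2 * a)^-1%:E * \int[mu]_(x in D) (f x ^+ 2)%:E + (a / 2)%:E * mu D)%E.
Proof.
move=> mD mf a0.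
have k0 : 0 <= (2 * a)^-1 by rewrite invr_ge0 mulr_ge0 // ltW.
have mf2 : measurable_fun D (fun x => (f x ^+ 2)%:E).
  exact/measurable_EFinP/measurable_funX.
rewrite -(integral_cst _ mD) -ge0_integralZl //; last first.
  by move=> x _; rewrite lee_fin sqr_ge0.
rewrite -ge0_integralD //; last 3 first.
- by move=> x _; rewrite mule_ge0 // lee_fin sqr_ge0.
- exact: measurable_funeM.
- by move=> x _; rewrite lee_fin mulr_ge0 // ltW.
apply: ge0_le_integral => //.
- exact/measurableT_comp/measurable_EFinP.
- by apply: emeasurable_funD => //; exact: measurable_funeM.
- move=> x _ /=; rewrite -EFinM -EFinD lee_fin -real_normK ?num_real //.
  have a_neq0 : a != 0 by rewrite gt_eqF.
  rewrite -subr_ge0 (_ : _ - _ = (`|f x| - a) ^+ 2 / (2 * a)); last by field.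
  by rewrite divr_ge0 ?sqr_ge0 // mulr_ge0 // ltW.
Qed.

Definition unit_itv {R : archiFieldType} (n : nat) : set R :=
  `[n.+1%:R, n.+2%:R[%classic.

Lemma itvey1_bigcup_unit_itv (R : archiFieldType) :
  `[1, +oo[%classic = \bigcup_n @unit_itv R n.
Proof.
apply/seteqP; split => [x /=|x [n _]]; rewrite ?in_itv /= ?andbT => x1.
  have x0 : 0 <= x by apply: le_trans x1.
  have n0 : (0 < Num.truncn x)%N by rewrite truncn_gt0.
  exists (Num.truncn x).-1; first by [].
  by rewrite /unit_itv /= in_itv /= prednK // truncn_itv.
move: x1; rewrite /unit_itv /= !in_itv /= andbT => /andP[+ _].
by apply: le_trans; rewrite ler1n.
Qed.

Lemma trivIset_unit_itv (R : archiFieldType) : trivIset setT (@unit_itv R).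
Proof.
move=> m n _ _ [x []]; rewrite /unit_itv /= !in_itv /=.
move=> /andP[m1 m2] /andP[n1 n2].
have := le_lt_trans m1 n2; have := le_lt_trans n1 m2; rewrite !ltr_nat; lia.
Qed.

Section cond_exp.
Local Open Scope ereal_scope.
Context {d dZ : measure_display} {T : measurableType d} {TZ : measurableType dZ}
  {R : realType}.
Variables (P : probability T R) (Z : T -> TZ) (Y : T -> R) (h : TZ -> R).
Hypotheses (mZ : measurable_fun setT Z) (mY : measurable_fun setT Y)
  (hY : is_cond_exp P Z Y h).

Lemma cond_exp_integral : \int[P]_w (h (Z w))%:E = \int[P]_w (Y w)%:E.
Proof. by case: hY => _ _ /(_ setT measurableT); rewrite preimage_setT => ->. Qed.

Let measurable_preimage {B : set TZ} : measurable B -> measurable (Z @^-1` B).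
Proof. by move=> mB; rewrite -[X in measurable X]setTI; exact: mZ. Qed.

Lemma cond_exp_cell_mass {B : set TZ} {a s : R} :
  measurable B -> (0 <= a)%R -> `|s|%R = 1%R ->
  (forall z, B z -> a <= s * h z)%R ->
  a%:E * P (Z @^-1` B) <= \int[P]_(w in Z @^-1` B) `|(Y w)%:E|.
Proof.
move=> mB a0 s1 aB; case: hY => mh ih hYB.
have mC := measurable_preimage mB.
have mhZ : measurable_fun setT (h \o Z) := measurableT_comp mh mZ.
rewrite -(integral_cst _ mC).
apply: (@le_trans _ _ (s%:E * \int[P]_(w in Z @^-1` B) (h (Z w))%:E)).
  rewrite -integralZl //; last exact: integrableS ih.
  apply: ge0_le_integral => //.
  - exact/measurable_funTS/measurable_EFinP/measurable_funM.
  - by move=> w Cw; rewrite lee_fin aB.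
rewrite -hYB //; apply: le_trans (lee_abs _) _.
rewrite abseM /= s1 mul1e; apply: le_abse_integral => //.
exact/measurable_funTS/measurable_EFinP.
Qed.

Lemma cond_exp_sqr_cell (B : set TZ) (a s : R) :
  measurable B -> (0 < a)%R -> `|s|%R = 1%R ->
  (forall z, B z -> a <= s * h z <= 2 * a)%R ->
  \int[P]_(w in Z @^-1` B) (h (Z w) ^+ 2)%:E <=
  4%:E * \int[P]_(w in Z @^-1` B) (Y w ^+ 2)%:E.
Proof.
move=> mB a0 s1 aB; have [mh _ _] := hY.
have mC := measurable_preimage mB.
have s2 : (s ^+ 2 = 1)%R by rewrite -real_normK ?num_real // s1 expr1n.
have PC : P (Z @^-1` B) = (fine (P (Z @^-1` B)))%:E.
  by rewrite fineK ?fin_num_measure.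
set c := fine (P (Z @^-1` B)) in PC *.
have c0 : (0 <= c)%R by rewrite -lee_fin -PC measure_ge0.
have hZ_le : \int[P]_(w in Z @^-1` B) (h (Z w) ^+ 2)%:E <= ((2 * a) ^+ 2 * c)%:E.
  rewrite EFinM -PC -integral_cst //; apply: ge0_le_integral => //.
  - by move=> w _; rewrite lee_fin sqr_ge0.
  - exact/measurable_funTS/measurable_EFinP/measurable_funX/measurableT_comp.
  - move=> w /aB /andP[ash sh2a].
    rewrite lee_fin -[(h _ ^+ 2)%R]mul1r -s2 -exprMn.
    rewrite lerXn2r ?nnegrE // ?(le_trans (ltW a0)) //; nra.
have mass := cond_exp_cell_mass mB (ltW a0) s1
  (fun z Bz => proj1 (andP (aB z Bz))).
have amgm : \int[P]_(w in Z @^-1` B) `|(Y w)%:E| <=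
    (2 * a)^-1%:E * \int[P]_(w in Z @^-1` B) (Y w ^+ 2)%:E +
    (a / 2)%:E * P (Z @^-1` B).
  exact: integral_abs_le_sqr (measurable_funTS mY) a0.
apply: le_trans hZ_le _.
move: (le_trans mass amgm); rewrite PC.
set I := \int[P]_(w in _) _.
have : 0 <= I by apply: integral_ge0 => w _; rewrite lee_fin sqr_ge0.
case: I => [i| |] //= i0 => [|_]; last by rewrite mulry gtr0_sg // mul1e leey.
rewrite lee_fin in i0; rewrite -!EFinM -EFinD !lee_fin => ineq.
have k1 : ((2 * a)^-1 * (2 * a) = 1)%R by rewrite mulVf // gt_eqF // mulr_gt0.
nra.
Qed.

Lemma cond_exp_sqr_tail (s : R) : `|s|%R = 1%R ->
  \int[P]_(w in Z @^-1` ((fun z => s * h z)%R @^-1` `[1%R, +oo[))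
    (h (Z w) ^+ 2)%:E <=
  4%:E * \int[P]_w (Y w ^+ 2)%:E.
Proof.
move=> s1; have [mh _ _] := hY.
pose B n := (fun z => s * h z)%R @^-1` unit_itv n.
have msh : measurable_fun setT (fun z => s * h z)%R by exact: measurable_funM.
have mB n : measurable (B n).
  rewrite /B -[X in measurable X]setTI.
  by apply: msh => //; exact: measurable_itv.
have mC n := measurable_preimage (mB n).
rewrite itvey1_bigcup_unit_itv !preimage_bigcup.
have tC : trivIset setT (fun n => Z @^-1` B n).
  move=> m n _ _ [w [Bm Bn]]; apply: trivIset_unit_itv => //.
  by exists (s * h (Z w))%R.
have hZ2_ge0 w : 0 <= (h (Z w) ^+ 2)%:E by rewrite lee_fin sqr_ge0.
have Y2_ge0 w : 0 <= (Y w ^+ 2)%:E by rewrite lee_fin sqr_ge0.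
have mY2 : measurable_fun setT (fun w => (Y w ^+ 2)%:E).
  exact/measurable_EFinP/measurable_funX.
rewrite ge0_integral_bigcup //; last first.
  exact/measurable_funTS/measurable_EFinP/measurable_funX/measurableT_comp.
apply: (@le_trans _ _
    (\sum_(n <oo) 4%:E * \int[P]_(w in Z @^-1` B n) (Y w ^+ 2)%:E)).
  apply: lee_nneseries => [n _ _|n _]; first exact: integral_ge0.
  apply: (cond_exp_sqr_cell _ n.+1%:R s (mB n)) => // z.
  rewrite /B /unit_itv /= in_itv /= => /andP[-> /ltW /le_trans]; apply.
  by rewrite -natrM ler_nat mul2n -addnn addSnnS leq_addl.
rewrite nneseriesZl; last by move=> n _; exact: integral_ge0.
rewrite -ge0_integral_bigcup //; last exact: measurable_funTS.
rewrite lee_pmul2l // ?lte_fin //; apply: ge0_subset_integral => //.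
exact: bigcupT_measurable.
Qed.

Lemma cond_exp_Lfun2 : Y \in Lfun P 2%:E -> h \o Z \in Lfun P 2%:E.
Proof.
move=> /Lfun2_integrable_sqr/integrable_lty EY2; have [mh _ _] := hY.
have mhZ : measurable_fun setT (h \o Z) := measurableT_comp mh mZ.
have mhZ2 : measurable_fun setT (fun w => (h (Z w) ^+ 2)%:E).
  exact/measurable_EFinP/measurable_funX.
apply: integrable_sqr_Lfun2 => //; apply/integrableP; split => //.
under eq_integral => w _ do rewrite gee0_abs ?lee_fin ?sqr_ge0 //.
pose A s := Z @^-1` ((fun z => s * h z)%R @^-1` `[1%R, +oo[).
have mA s : measurable (A s).
  apply: measurable_preimage; rewrite -[X in measurable X]setTI.
  by apply: measurable_funM => //; exact: measurable_itv.
set f := fun w => (h (Z w) ^+ 2)%:E.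
have tail_fin s : `|s|%R = 1%R -> \int[P]_(w in A s) f w < +oo.
  move=> s1; apply: le_lt_trans (cond_exp_sqr_tail _ s1) _.
  by apply: lte_mul_pinfty => //; exact: EY2.
have f0 w : 0 <= f w by rewrite lee_fin sqr_ge0.
have fA0 s w : 0 <= (f \_ (A s)) w by rewrite patchE; case: ifP.
have mfA s : measurable_fun setT (f \_ (A s)).
  exact/(measurable_restrictT _ (mA s))/measurable_funTS.
(* h(Z)^2 <= 1 off the two tails {h(Z) >= 1} and {- h(Z) >= 1} *)
apply: (@le_lt_trans _ _
    (\int[P]_w (cst 1 w + (f \_ (A 1%R)) w + (f \_ (A (-1)%R)) w))).
  apply: ge0_le_integral => // [w _||w _]; first exact: f0.
    by apply: emeasurable_funD => //; exact: emeasurable_funD.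
  rewrite !patchE; case: ifPn => [_|]; case: ifPn => [_|]; rewrite /= lee_fin;
    have := sqr_ge0 (h (Z w)); rewrite ?notin_setE /= ?in_itv /= ?andbT; try lra.
  move=> _; rewrite /A /= !in_itv /= !andbT mulN1r mul1r.
  move=> /negP; rewrite -ltNge => hm /negP; rewrite -ltNge => hp; nra.
rewrite ge0_integralD //; last 2 first.
- by move=> w _; rewrite adde_ge0.
- exact: emeasurable_funD.
rewrite ge0_integralD //.
rewrite -!integral_mkcond integral_cst // [X in _ * X]probability_setT mule1.
apply: lte_add_pinfty; first apply: lte_add_pinfty.
- exact: ltry.
- by apply: tail_fin; rewrite normr1.
- by apply: tail_fin; rewrite normrN normr1.
Qed.

End cond_exp.

Section cond_exp_prod.
Local Open Scope ereal_scope.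
Context {R : realType} {d dS dZ : measure_display} {T : measurableType d}
  {S : measurableType dS} {TZ : measurableType dZ} {P : probability T R}
  {Q : probability S R} {Z : T * S -> TZ} {Y : T -> R} {h : TZ -> R}.

Lemma cond_exp_prod_integral : measurable_fun setT Y ->
  is_cond_exp (P \x Q) Z (fun w => Y w.1) h ->
  \int[P \x Q]_w ((h \o Z) w)%:E = \int[P]_x (Y x)%:E.
Proof.
move=> mY /cond_exp_integral ->.
exact: integral_prod_fst (measurableT_comp _ mY).
Qed.

Lemma variance_cond_exp_prod_fin_num : measurable_fun setT Z ->
  Y \in Lfun P 2%:E -> is_cond_exp (P \x Q) Z (fun w => Y w.1) h ->
  'V_(P \x Q)[h \o Z] \is a fin_num.
Proof.
move=> mZ Y2 hY; apply/variance_fin_num/cond_exp_Lfun2 => //.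
- exact: measurableT_comp (Lfun_measurable Y2) measurable_fst.
- exact: hY.
- exact: Lfun2_prod_fst Y2.
Qed.

End cond_exp_prod.

Section mixture_representation.
Local Open Scope ereal_scope.
Context {R : realType} {d dS1 dS2 dZ1 dZ2 : measure_display}
  {T : measurableType d} {S1 : measurableType dS1} {S2 : measurableType dS2}
  {TZ1 : measurableType dZ1} {TZ2 : measurableType dZ2}.
Variables (P : probability T R) (Q1 : probability S1 R) (Q2 : probability S2 R).
Variable t : R.
Hypothesis t01 : (0 <= t <= 1)%R.
Variables (Z1 : T * S1 -> TZ1) (Z2 : T * S2 -> TZ2) (z1 : TZ1) (z2 : TZ2).
Hypotheses (mZ1 : measurable_fun setT Z1) (mZ2 : measurable_fun setT Z2).

Definition mixZ :=
  mixf (fun v => (true, (Z1 v, z2))) (fun v => (false, (z1, Z2 v))).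

Definition mixh (h1 : TZ1 -> R) (h2 : TZ2 -> R) (z : bool * (TZ1 * TZ2)) : R :=
  if z.1 then h1 z.2.1 else h2 z.2.2.

Lemma measurable_mixh (h1 : TZ1 -> R) (h2 : TZ2 -> R) :
  measurable_fun setT h1 -> measurable_fun setT h2 ->
  measurable_fun setT (mixh h1 h2).
Proof.
move=> mh1 mh2; apply: measurable_fun_ifT => //.
- exact: measurableT_comp mh1 (measurableT_comp measurable_fst measurable_snd).
- exact: measurableT_comp mh2 (measurableT_comp measurable_snd measurable_snd).
Qed.

Lemma mixh_mixZ (h1 : TZ1 -> R) (h2 : TZ2 -> R) :
  mixh h1 h2 \o mixZ = mixf (h1 \o Z1) (h2 \o Z2).
Proof. by apply/funext => -[x [[] s]]. Qed.

Variable Y : T -> R.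

Lemma is_cond_exp_mix (h1 : TZ1 -> R) (h2 : TZ2 -> R) :
  P.-integrable setT (EFin \o Y) ->
  is_cond_exp (P \x Q1) Z1 (fun w => Y w.1) h1 ->
  is_cond_exp (P \x Q2) Z2 (fun w => Y w.1) h2 ->
  is_cond_exp (P \x mixQ Q1 Q2 t) mixZ (fun w => Y w.1) (mixh h1 h2).
Proof.
move=> iY [mh1 ih1 e1] [mh2 ih2 e2].
have hZ_mix : (fun w => (mixh h1 h2 (mixZ w))%:E) =
    mixf (fun v => (h1 (Z1 v))%:E) (fun v => (h2 (Z2 v))%:E).
  by rewrite -(mixf_comp EFin (h1 \o Z1)) -mixh_mixZ.
have Y_mix : (fun w => (Y w.1)%:E) =
    mixf (fun v : T * S1 => (Y v.1)%:E) (fun v : T * S2 => (Y v.1)%:E).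
  by apply/funext => -[x [[] s]].
split; first exact: measurable_mixh.
  by rewrite hZ_mix; exact: integrable_mix.
move=> B mB; pose B1 := (fun z => (true, (z, z2))) @^-1` B.
pose B2 := (fun z => (false, (z1, z))) @^-1` B.
have mB1 : measurable B1.
  rewrite -[X in measurable X]setTI; apply: (_ : measurable_fun _ _) => //.
  by apply: measurable_fun_pair => //; apply: measurable_fun_pair.
have mB2 : measurable B2.
  rewrite -[X in measurable X]setTI; apply: (_ : measurable_fun _ _) => //.
  by apply: measurable_fun_pair => //; apply: measurable_fun_pair.
have mC1 : measurable (Z1 @^-1` B1).
  by rewrite -[X in measurable X]setTI; exact: mZ1.
have mC2 : measurable (Z2 @^-1` B2).
  by rewrite -[X in measurable X]setTI; exact: mZ2.
have iYi dS (S : measurableType dS) (Q : probability S R) :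
    (P \x Q).-integrable setT (fun w => (Y w.1)%:E).
  exact: integrable_prod_fst P Q (EFin \o Y) iY.
have integral_mix_preimage (F1 : T * S1 -> \bar R) (F2 : T * S2 -> \bar R) :
    (P \x Q1).-integrable setT F1 -> (P \x Q2).-integrable setT F2 ->
    \int[P \x mixQ Q1 Q2 t]_(w in mixZ @^-1` B) mixf F1 F2 w =
    t%:E * \int[P \x Q1]_(w in Z1 @^-1` B1) F1 w +
    (1 - t)%:E * \int[P \x Q2]_(w in Z2 @^-1` B2) F2 w.
  move=> iF1 iF2; rewrite integral_mkcond (integral_mkcond (Z1 @^-1` B1)).
  rewrite (integral_mkcond (Z2 @^-1` B2)) -integral_mix //.
  - by apply: eq_integral => -[x [[] s]] _; rewrite /mixf !patchE.
  - apply/(integrable_mkcond _ mC1).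
    exact: integrableS measurableT mC1 (@subsetT _ _) iF1.
  - apply/(integrable_mkcond _ mC2).
    exact: integrableS measurableT mC2 (@subsetT _ _) iF2.
by rewrite Y_mix hZ_mix !integral_mix_preimage ?iYi // e1 // e2.
Qed.

Lemma variance_mix (h1 : TZ1 -> R) (h2 : TZ2 -> R) : Y \in Lfun P 2%:E ->
  is_cond_exp (P \x Q1) Z1 (fun w => Y w.1) h1 ->
  is_cond_exp (P \x Q2) Z2 (fun w => Y w.1) h2 ->
  fine 'V_(P \x mixQ Q1 Q2 t)[mixh h1 h2 \o mixZ] =
  (t * fine 'V_(P \x Q1)[h1 \o Z1] + (1 - t) * fine 'V_(P \x Q2)[h2 \o Z2])%R.
Proof.
move=> Y2 cY1 cY2; have mY := Lfun_measurable Y2.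
have cY := is_cond_exp_mix h1 h2 (Lfun2_integrable Y2) cY1 cY2.
have V1 := variance_cond_exp_prod_fin_num mZ1 Y2 cY1.
have V2 := variance_cond_exp_prod_fin_num mZ2 Y2 cY2.
rewrite !variance_integral in V1 V2 *.
rewrite (cond_exp_prod_integral mY cY1) in V1 *.
rewrite (cond_exp_prod_integral mY cY2) in V2 *.
rewrite (cond_exp_prod_integral mY cY) mixh_mixZ.
set m := fine (\int[P]_x (Y x)%:E).
have -> : (fun w => ((mixf (h1 \o Z1) (h2 \o Z2) w - m) ^+ 2)%:E) =
    mixf (fun v => (((h1 \o Z1) v - m) ^+ 2)%:E)
         (fun v => (((h2 \o Z2) v - m) ^+ 2)%:E).
  exact: mixf_comp (fun x => ((x - m) ^+ 2)%:E) _ _.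
have [[mh1 _ _] [mh2 _ _]] := (cY1, cY2).
rewrite ge0_integral_mix //.
  by rewrite -(fineK V1) -(fineK V2) -!EFinM -EFinD.
- apply/measurable_EFinP/measurable_funX/measurable_funB => //.
  exact: measurableT_comp.
- apply/measurable_EFinP/measurable_funX/measurable_funB => //.
  exact: measurableT_comp.
- by move=> w; rewrite lee_fin sqr_ge0.
- by move=> w; rewrite lee_fin sqr_ge0.
Qed.

End mixture_representation.

Theorem lemma1 (d : measure_display) (T : measurableType d) (R : realType)
  (P : probability T R) (dX : measure_display) (TX : measurableType dX)
  (X : T -> TX) (A Y : T -> R) :
  measurable_fun setT X ->
  A \in Lfun P 2%:E -> Y \in Lfun P 2%:E ->
  forall (p q : R * R) (t : R),
    R_LS P X A Y p -> R_LS P X A Y q -> 0 <= t <= 1 ->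
    R_LS P X A Y (t * p.1 + (1 - t) * q.1, t * p.2 + (1 - t) * q.2).
Proof.
move=> mX HA HY p q t.
move=> [dS1 [S1 [Q1 [dZ1 [TZ1 [g1 [hY1 [hA1 /= [mg1 cY1 cA1 ->]]]]]]]]].
move=> [dS2 [S2 [Q2 [dZ2 [TZ2 [g2 [hY2 [hA2 /= [mg2 cY2 cA2 ->]]]]]]]]] t01.
case: (probability_inhabited P) => x0; case: (probability_inhabited Q1) => s1.
case: (probability_inhabited Q2) => s2.
pose Z1 (w : T * S1) := g1 (X w.1, w.2); pose Z2 (w : T * S2) := g2 (X w.1, w.2).
have mZ1 : measurable_fun setT Z1.
  apply/(measurableT_comp mg1)/measurable_fun_pair => //.
  exact: measurableT_comp mX measurable_fst.
have mZ2 : measurable_fun setT Z2.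
  apply/(measurableT_comp mg2)/measurable_fun_pair => //.
  exact: measurableT_comp mX measurable_fst.
pose z1 := Z1 (x0, s1); pose z2 := Z2 (x0, s2).
have mix := is_cond_exp_mix P Q1 Q2 t t01 Z1 Z2 z1 z2 mZ1 mZ2.
have var := variance_mix P Q1 Q2 t t01 Z1 Z2 z1 z2 mZ1 mZ2.
exists _, _, (mixQ Q1 Q2 t), _, _,
  (mixf (fun u => (true, (g1 u, z2))) (fun u => (false, (z1, g2 u)))),
  (mixh hY1 hY2), (mixh hA1 hA2); split.
- apply: measurable_mixf; apply: measurable_fun_pair => //;
    by apply: measurable_fun_pair.
- exact: mix _ _ _ (Lfun2_integrable HY) cY1 cY2.
- exact: mix _ _ _ (Lfun2_integrable HA) cA1 cA2.
- by rewrite (var Y) ?(var A).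
Qed.
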